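(* Let $P_c$ be the program defined in the context, for an arbitrary ordering $\alpha$ of $X$. For every supported model $M$ of $P_c$, the digraph on $X$ with arc set $\{(p,q):\mathrm{dep}(p,q)\in M\}$ contains no directed cycle, including cycles of length $1$.
   Context: Delete-relaxed planning. Let $X$ be a finite set of atomic propositions, $A^+$ a finite set of actions, and $G\subseteq X$. Each action $\vec a\in A^+$ has $pre(\vec a),add(\vec a)\subseteq X$; there are no delete effects and the initial state is $\emptyset$. For each action $\vec a$ there is an action atom $a$. Further atoms are: - $\mathrm{dep}(p,q)$ for $p,q\in X$; - $\mathrm{ws}(a,p)$ for actions $\vec a$ and $p\in X$; - a special atom $f$. All these atoms are pairwise distinct and distinct from $X$. Logic programs. A normal rule has the form $h\leftarrow b_1,\dots,b_n,\mathtt{not}\,c_1,\dots,\mathtt{not}\,c_m$, and a choice rule has the form $\{h\}\leftarrow(\text{same body})$. An interpretation $I$ satisfies a body if all $b_i\in I$ and no $c_j\in I$. $I$ is a model if every normal rule whose body $I$ satisfies has its head in $I$. The supporting rules of $P$ w.r.t. $I$ are: - the normal rules whose body $I$ satisfies; - the choice rules whose body $I$ satisfies and whose head is in $I$. A model $I$ of $P$ is supported if $I$ is exactly the set of heads of its supporting rules. Vertex elimination. For a digraph $(V',E')$ and vertex $v$: - the fill-in is $F(v)=\{(x,y):(x,v),(v,y)\in E',x\ne y\}$; - the $v$-elimination graph deletes $v$ together with its incident arcs and adds $F(v)$. For an ordering $\alpha:\{1,\dots,n\}\to V$ of a digraph $\mathcal{G}$ with $n$ vertices, set $\mathcal{G}_0=\mathcal{G}$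 and let $\mathcal{G}_i$ be the $\alpha(i)$-elimination graph of $\mathcal{G}_{i-1}$ for $i=1,\dots,n-1$. Let $F_{i-1}(\alpha(i))$ be the fill-in of $\alpha(i)$ in $\mathcal{G}_{i-1}$. The vertex elimination graph is $\mathcal{G}^*_\alpha=(V,E^* )$, where $E^*$ is the union of the original arcs and all $F_{i-1}(\alpha(i))$. Program $P_c$. Let $E=\{(p,q)\in X\times X:\exists \vec a\in A^+,\ p\in add(\vec a),\ q\in pre(\vec a)\}$ and $\mathcal{G}=(X,E)$. Let $n=|X|$, fix an ordering $\alpha$ of $X$, and let $E^*$ be the arc set of $\mathcal{G}^*_\alpha$. $P_c$ consists of: - (C1) $\{\mathrm{dep}(p,q)\}\leftarrow q$ for each $(p,q)\in E$; - (C2) $\{\mathrm{ws}(a,p)\}\leftarrow \mathrm{dep}(p,q_1),\dots,\mathrm{dep}(p,q_k)$ for each $\vec a\in A^+$ and $p\in add(\vec a)$, where $pre(\vec a)=\{q_1,\dots,q_k\}$; - (C3) $p\leftarrow \mathrm{ws}(a,p)$ and $a\leftarrow\mathrm{ws}(a,p)$ for each $\vec a\in A^+$ and $p\in add(\vec a)$; - (C4) $g\leftarrow\mathtt{not}\,g$ for each $g\in G$; - (C5) $\mathrm{dep}(p,q)\leftarrow\mathrm{dep}(p,\alpha(i)),\mathrm{dep}(\alpha(i),q)$ for each $i\in\{1,\dots,n-1\}$ and each $(p,q)\in F_{i-1}(\alpha(i))$; - (C6) $f\leftarrow \mathrm{dep}(p,q),\mathrm{dep}(q,p),\mathtt{not}\,f$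 for all $p,q\in X$ (possibly $p=q$) with $(p,q)\in E^*$ and $(q,p)\in E^*$. *)

From Stdlib Require Import List Relations.
From mathcomp Require Import all_boot.
Set Implicit Arguments. Unset Strict Implicit. Unset Printing Implicit Defensive.

(** * Atoms: propositions p (AX p), action atoms a (AAct a),
    dep(p,q), ws(a,p), and the special atom f.  Pairwise distinct by
    construction. *)
Inductive atom (X A : Type) : Type :=
  | AX of X
  | AAct of A
  | Dep of X & X
  | Ws of A & X
  | Ff.

Record rule (T : Type) := mkRule {
  head : T;
  is_choice : bool;          (* true: choice rule {h} <- body ; false: normal rule *)
  pos : list T;
  neg : list T }.

Definition program (T : Type) := rule T -> Prop.
Definition interp (T : Type) := T -> Prop.

Definition sat_body T (I : interp T) (r : rule T) : Prop :=
  (forall b, In b (pos r) -> I b) /\ (forall c, In c (neg r) -> ~ I c).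

Definition is_model T (P : program T) (I : interp T) : Prop :=
  forall r, P r -> is_choice r = false -> sat_body I r -> I (head r).

Definition supporting_rule T (P : program T) (I : interp T) (r : rule T) : Prop :=
  P r /\ sat_body I r /\ (is_choice r = false \/ I (head r)).

Definition supported_model T (P : program T) (I : interp T) : Prop :=
  is_model P I /\
  (forall x, I x <-> exists r, supporting_rule P I r /\ head r = x).

Section Elim.
Variable X : finType.

Definition fill_in (E : {set X * X}) (v : X) : {set X * X} :=
  [set e | [&& (e.1, v) \in E, (v, e.2) \in E & e.1 != e.2]].

Definition elim_graph (E : {set X * X}) (v : X) : {set X * X} :=
  [set e in E :|: fill_in E v | (e.1 != v) && (e.2 != v)].

Definition elim_seq (E : {set X * X}) (s : seq X) : {set X * X} :=
  foldl elim_graph E s.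
End Elim.

Section Pc.
Variables (X A : finType) (pre add : A -> {set X}) (G : {set X}).
Variable alpha : 'I_#|X| -> X.   (* ordering, index k stands for paper's k+1 *)

Definition depE : {set X * X} :=
  [set e | [exists a : A, (e.1 \in add a) && (e.2 \in pre a)]].

Definition alpha_seq : seq X := [seq alpha i | i <- enum 'I_#|X|].

Definition Gk (k : nat) : {set X * X} := elim_seq depE (take k alpha_seq).

(** F_{i-1}(alpha(i)) for i = k+1 *)
Definition Fk (k : 'I_#|X|) : {set X * X} := fill_in (Gk k) (alpha k).

Definition Estar : {set X * X} :=
  depE :|: \bigcup_(k : 'I_#|X| | k.+1 < #|X|) Fk k.

Definition Pc : program (atom X A) := fun r =>
  (* C1 *)
  (exists p q, (p, q) \in depE /\
     r = mkRule (Dep A p q) true [:: AX A q] [::]) \/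
  (* C2 *)
  (exists a p, p \in add a /\
     r = mkRule (Ws a p) true [seq Dep A p q | q <- enum (pre a)] [::]) \/
  (* C3 *)
  (exists a p, p \in add a /\
     (r = mkRule (AX A p) false [:: Ws a p] [::] \/
      r = mkRule (AAct X a) false [:: Ws a p] [::])) \/
  (* C4 *)
  (exists g, g \in G /\ r = mkRule (AX A g) false [::] [:: AX A g]) \/
  (* C5 *)
  (exists (k : 'I_#|X|) p q, k.+1 < #|X| /\ (p, q) \in Fk k /\
     r = mkRule (Dep A p q) false [:: Dep A p (alpha k); Dep A (alpha k) q] [::]) \/
  (* C6 *)
  (exists p q, (p, q) \in Estar /\ (q, p) \in Estar /\
     r = mkRule (Ff X A) false [:: Dep A p q; Dep A q p] [:: Ff X A]).
End Pc.

From Pilot Require Import Defs.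
From Stdlib Require Import List Relations ClassicalEpsilon.
From mathcomp Require Import all_boot zify.

Set Implicit Arguments.
Unset Strict Implicit.
Unset Printing Implicit Defensive.

(* Write D for the relation {(p,q) | dep(p,q) in M} and
   idx for the inverse of the ordering alpha.
   - The atom f is never in a supported model: its only rules (C6) need
     "not f".  Hence the constraints C6 are never triggered, so D has no
     cycle of length 1 or 2 inside E*; and D lies inside E*, because the
     only rules with a dep-head are C1 (arcs of E) and C5 (fill-in arcs).
   - Vertex elimination: an arc (x,y) of E* survives in the elimination
     graph G_m with m = min(idx x, idx y).  So if D x v, D v y, x <> y and
     v has a smaller index than x and y, then (x,y) is in the fill-in
     F_{idx v}, and rule C5 puts (x,y) into D.
   - A purely combinatorial lemma: a relation without 1- and 2-cycles that
     can be shortcut around any vertex of minimal rank is acyclic (shorten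
     a hypothetical cycle at its vertex of minimal rank).
   The theorem follows by turning a transitive-closure loop into a cycle. *)

Section ShortcutAcyclic.
Variables (T : finType) (rank : T -> nat) (r : rel T).
Hypothesis rank_inj : injective rank.
Hypothesis no_short_cycle : forall x y, r x y -> r y x -> False.
Hypothesis shortcut : forall x v y, r x v -> r v y -> x != y ->
  rank v < rank x -> rank v < rank y -> r x y.

Lemma cycle_min_rank_start (l : seq T) : l != [::] -> cycle r l ->
  exists v s, [/\ cycle r (v :: s), size s < size l &
                  forall u, u \in s -> rank v <= rank u].
Proof.
case: l => [//|x0 l0] _ Hc; set l := x0 :: l0.
have x0l : x0 \in l by rewrite inE eqxx.
case: (arg_minnP rank x0l) => v vl vmin.
have [s Hrot] : exists s, rot (index v l) l = v :: s by eexists; exact: rot_index.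
exists v, s; split.
- by rewrite -Hrot rot_cycle.
- by rewrite -(size_rot (index v l) l) Hrot.
move=> u us; apply: vmin.
have : u \in rot (index v l) l by rewrite Hrot inE us orbT.
by rewrite mem_rot.
Qed.

(* Shortcutting the minimal vertex v of a cycle v -> y -> ... -> x -> v
   yields the strictly shorter cycle y -> ... -> x -> y. *)
Lemma shortcut_acyclic (l : seq T) : l != [::] -> ~~ cycle r l.
Proof.
have [n] := ubnP (size l); elim: n l => // n IH l Hsize Hl.
apply/negP => /(cycle_min_rank_start Hl) [v [s [Hc Hs vmin]]].
have no_loop u : r u u -> False by move=> ruu; exact: (no_short_cycle ruu ruu).
case: s Hc Hs vmin => [|y t]; first by rewrite /= andbT => /no_loop.
case/lastP: t => [|t x]; first by rewrite /= andbT => /andP [] /no_short_cycle.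
rewrite /= rcons_path -cats1 cat_path /= andbT last_cat /=.
case/and3P => rvy pyx rxv Hs vmin.
have rank_lt u : u \in y :: t ++ [:: x] -> u != v -> rank v < rank u.
  by move=> us uv; rewrite ltn_neqAle vmin // andbT (inj_eq rank_inj) eq_sym.
have x_ne_y : x != y.
  by apply: contraTneq rvy => <-; apply/negP/(no_short_cycle rxv).
have x_ne_v : x != v by apply: contraTneq rxv => ->; apply/negP/no_loop.
have y_ne_v : y != v by apply: contraTneq rvy => ->; apply/negP/no_loop.
have rxy : r x y.
  apply: (shortcut rxv rvy x_ne_y); apply: rank_lt => //.
  - by rewrite inE mem_cat inE eqxx !orbT.
  - by rewrite inE eqxx.
have : ~~ cycle r (y :: t ++ [:: x]) by apply: IH => //; exact: leq_trans Hs Hsize.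
by rewrite /= rcons_path cat_path last_cat /= andbT pyx rxy.
Qed.
End ShortcutAcyclic.

Section EliminationOrder.
Variables (X : finType) (E : {set X * X}) (alpha : 'I_#|X| -> X).
Variable idx : X -> 'I_#|X|.
Hypotheses (alphaK : cancel alpha idx) (idxK : cancel idx alpha).
Local Notation n := #|X|.

Definition elim_prefix (k : nat) : {set X * X} :=
  elim_seq E (take k (alpha_seq alpha)).

Lemma elim_prefix0 : elim_prefix 0 = E.
Proof. by rewrite /elim_prefix take0. Qed.

Lemma elim_prefixS (k : 'I_n) :
  elim_prefix k.+1 = elim_graph (elim_prefix k) (alpha k).
Proof.
have size_seq : size (alpha_seq alpha) = n by rewrite size_map size_enum_ord.
rewrite /elim_prefix (take_nth (alpha k)) ?size_seq // -cats1 /elim_seq foldl_cat.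
by rewrite /= (nth_map k) ?nth_ord_enum ?size_enum_ord.
Qed.

Lemma idx_neq (x : X) (k : 'I_n) : x != alpha k -> (idx x : nat) != k.
Proof. by apply: contra => /eqP/val_inj <-; rewrite idxK. Qed.

Lemma elim_prefix_ge (k : nat) (e : X * X) : k <= n -> e \in elim_prefix k ->
  k <= idx e.1 /\ k <= idx e.2.
Proof.
elim: k e => [//|k IH] e Hk; have Hk' : k < n by [].
rewrite (elim_prefixS (Ordinal Hk')) inE /= => /andP [He /andP [H1 H2]].
have N1 := idx_neq H1; have N2 := idx_neq H2.
have IH' := IH _ (ltnW Hk); rewrite !ltn_neqAle ![(k == _)]eq_sym N1 N2 /=.
move: He; rewrite inE => /orP [/IH' //|].
by rewrite inE => /andP [/IH' [-> _] /andP [/IH' [_ ->] _]].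
Qed.

Lemma elim_prefix_survives (j m : nat) (e : X * X) : j <= m -> m <= n ->
  e \in elim_prefix j -> m <= idx e.1 -> m <= idx e.2 -> e \in elim_prefix m.
Proof.
elim: m => [|m IH] jm mn He H1 H2; first by case: j jm He.
case: (ltngtP j m.+1) jm => // [jm|<- //] _; have Hm : m < n by [].
have He' : e \in elim_prefix m by apply: IH => //; exact: ltnW.
rewrite (elim_prefixS (Ordinal Hm)) inE /= inE He' /=.
have not_alpha u : m < idx u -> u != alpha (Ordinal Hm).
  by apply: contraTneq => ->; rewrite alphaK ltnn.
by rewrite !not_alpha.
Qed.

Lemma minn_idx_le (x y : X) : minn (idx x) (idx y) <= n.
Proof. exact: leq_trans (geq_minl _ _) (ltnW (ltn_ord _)). Qed.

Lemma arc_in_min_prefix (x y : X) : (x, y) \in E ->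
  (x, y) \in elim_prefix (minn (idx x) (idx y)).
Proof.
move=> Exy; apply: (@elim_prefix_survives 0) => //.
- exact: minn_idx_le.
- by rewrite elim_prefix0.
- exact: geq_minl.
- exact: geq_minr.
Qed.

Lemma fill_in_min_prefix (k : 'I_n) (x y : X) :
  (x, y) \in fill_in (elim_prefix k) (alpha k) ->
  (x, y) \in elim_prefix (minn (idx x) (idx y)).
Proof.
rewrite inE /= => /and3P [Hxk Hky x_ne_y].
have [kx _] := elim_prefix_ge (ltnW (ltn_ord k)) Hxk.
have [_ ky] := elim_prefix_ge (ltnW (ltn_ord k)) Hky; rewrite /= in kx ky.
have [-> | x_ne_k] := eqVneq x (alpha k).
  by rewrite alphaK (minn_idPl ky).
have [-> | y_ne_k] := eqVneq y (alpha k).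
  by rewrite alphaK (minn_idPr kx).
have kx' : k < idx x by rewrite ltn_neqAle eq_sym idx_neq.
have ky' : k < idx y by rewrite ltn_neqAle eq_sym idx_neq.
apply: (@elim_prefix_survives k.+1).
- by rewrite leq_min kx' ky'.
- exact: minn_idx_le.
- by rewrite elim_prefixS inE /= x_ne_k y_ne_k !inE Hxk Hky x_ne_y orbT.
- exact: geq_minl.
- exact: geq_minr.
Qed.
End EliminationOrder.

Section SupportedModel.
Variables (X A : finType) (pre add : A -> {set X}) (G : {set X}).
Variable alpha : 'I_#|X| -> X.
Local Notation Pc := (Pc pre add G alpha).
Local Notation Estar := (Estar pre add alpha).

Lemma Pc_head_f (r : rule (atom X A)) : Pc r -> Defs.head r = Ff X A ->
  In (Ff X A) (neg r).
Proof.
by case=> [[p [q [_ ->]]]|[[a [p [_ ->]]]|[[a [p [_ [->|->]]]]|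
  [[g [_ ->]]|[[k [p [q [_ [_ ->]]]]]|[p [q [_ [_ ->]]]]]]]]] //=; left.
Qed.

Lemma Pc_head_dep (r : rule (atom X A)) (p q : X) : Pc r -> Defs.head r = Dep A p q ->
  (p, q) \in Estar.
Proof.
case=> [[p' [q' [Hpq ->]]]|[[a [p' [_ ->]]]|[[a [p' [_ [->|->]]]]|
  [[g [_ ->]]|[[k [p' [q' [Hk [Hpq ->]]]]]|[p' [q' [_ [_ ->]]]]]]]]] //= [<- <-].
- by rewrite inE Hpq.
- by rewrite inE; apply/orP; right; apply/bigcupP; exists k.
Qed.

Variable M : interp (atom X A).
Hypothesis HM : supported_model Pc M.

Lemma supported_atom (x : atom X A) : M x ->
  exists2 r, Pc r /\ sat_body M r & Defs.head r = x.
Proof.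
move=> Mx; case: HM => _ /(_ x) [/(_ Mx) [r [[Pr [Mr _]] <-]] _]; by exists r.
Qed.

(* f cannot be supported: its rules require f to be false. *)
Lemma f_not_in_model : ~ M (Ff X A).
Proof.
move=> Mf; have [r [Pr [_ Mneg]] Hr] := supported_atom Mf.
exact: Mneg _ (Pc_head_f Pr Hr) Mf.
Qed.

Lemma dep_in_Estar (p q : X) : M (Dep A p q) -> (p, q) \in Estar.
Proof. by case/supported_atom => r [Pr _]; exact: Pc_head_dep. Qed.

(* Since f is false, the constraints C6 forbid 1- and 2-cycles of dep. *)
Lemma dep_no_short_cycle (p q : X) : M (Dep A p q) -> M (Dep A q p) -> False.
Proof.
move=> Mpq Mqp; apply: f_not_in_model; case: HM => HMmod _.
apply: (HMmod (mkRule (Ff X A) false [:: Dep A p q; Dep A q p] [:: Ff X A])) => //.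
  by do 5 right; exists p, q; rewrite !dep_in_Estar.
by split=> [b /= [<-|[<-|[]]] // | c /= [<-|[]]]; last exact: f_not_in_model.
Qed.

Lemma dep_fill_in (k : 'I_#|X|) (p q : X) : k.+1 < #|X| ->
  (p, q) \in Fk pre add alpha k ->
  M (Dep A p (alpha k)) -> M (Dep A (alpha k) q) -> M (Dep A p q).
Proof.
move=> Hk Hpq Mpk Mkq; case: HM => HMmod _.
apply: (HMmod (mkRule (Dep A p q) false [:: Dep A p (alpha k); Dep A (alpha k) q] [::])) => //.
  by do 4 right; left; exists k, p, q.
by split=> [b /= [<-|[<-|[]]] // | c []].
Qed.
End SupportedModel.

Lemma clos_trans_path (T : Type) (R : T -> T -> Prop) (r : rel T) :
  (forall p q, R p q -> r p q) ->
  forall p q, clos_trans T R p q -> exists s, path r p (rcons s q).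
Proof.
move=> Rr p q; elim=> [x y /Rr rxy | x y z _ [s1 P1] _ [s2 P2]].
  by exists [::]; rewrite /= rxy.
by exists (rcons s1 y ++ s2); rewrite rcons_cat cat_path P1 last_rcons P2.
Qed.

Section Acyclicity.
Variables (X A : finType) (pre add : A -> {set X}) (G : {set X}).
Variables (alpha : 'I_#|X| -> X) (idx : X -> 'I_#|X|).
Hypotheses (alphaK : cancel alpha idx) (idxK : cancel idx alpha).
Variable M : interp (atom X A).
Hypothesis HM : supported_model (Pc pre add G alpha) M.
Local Notation Gdep := (elim_prefix (depE pre add) alpha).

Lemma Estar_min_prefix (x y : X) : (x, y) \in Estar pre add alpha ->
  (x, y) \in Gdep (minn (idx x) (idx y)).
Proof.
rewrite inE => /orP [/arc_in_min_prefix | /bigcupP [k _]]; first exact.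
exact: fill_in_min_prefix.
Qed.

(* dep can be shortcut around a vertex v of smaller index than its
   neighbours: (x,v) and (v,y) both survive in G_{idx v}, so (x,y) is a
   fill-in arc of the elimination of v, and rule C5 fires. *)
Lemma dep_shortcut (x v y : X) : M (Dep A x v) -> M (Dep A v y) -> x != y ->
  idx v < idx x -> idx v < idx y -> M (Dep A x y).
Proof.
move=> Mxv Mvy x_ne_y vx vy.
have idx_xy : (idx x : nat) != idx y by rewrite (inj_eq val_inj) (inj_eq (can_inj idxK)).
have Hk : (idx v).+1 < #|X|.
  by have := ltn_ord (idx x); have := ltn_ord (idx y); move: idx_xy vx vy; lia.
apply: (dep_fill_in HM Hk); rewrite ?idxK //.
have Gxv := Estar_min_prefix (dep_in_Estar HM Mxv).
have Gvy := Estar_min_prefix (dep_in_Estar HM Mvy).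
rewrite (minn_idPr (ltnW vx)) in Gxv; rewrite (minn_idPl (ltnW vy)) in Gvy.
by rewrite /Fk inE /= idxK; apply/and3P.
Qed.
End Acyclicity.

Definition dep_rel (X A : finType) (M : interp (atom X A)) : rel X :=
  fun p q => if excluded_middle_informative (M (Dep A p q)) then true else false.

Lemma dep_relP (X A : finType) (M : interp (atom X A)) (p q : X) :
  dep_rel M p q <-> M (Dep A p q).
Proof. by rewrite /dep_rel; case: excluded_middle_informative. Qed.

Theorem mainTheorem4 (X A : finType) (pre add : A -> {set X}) (G : {set X})
  (alpha : 'I_#|X| -> X) (alpha_bij : bijective alpha)
  (M : interp (atom X A)) :
  supported_model (Pc pre add G alpha) M ->
  ~ (exists p : X, clos_trans X (fun p q => M (Dep A p q)) p p).
Proof.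
move=> HM [p loop_p]; have [idx alphaK idxK] := alpha_bij.
have [s cycle_s] := clos_trans_path (fun p q => proj2 (dep_relP M p q)) loop_p.
have idx_inj : injective (fun x => nat_of_ord (idx x)).
  by move=> x y /val_inj /(can_inj idxK).
have no_short x y : dep_rel M x y -> dep_rel M y x -> False.
  by move=> /dep_relP Mxy /dep_relP Myx; exact: (dep_no_short_cycle HM Mxy Myx).
have shortcut x v y : dep_rel M x v -> dep_rel M v y -> x != y ->
    idx v < idx x -> idx v < idx y -> dep_rel M x y.
  move=> /dep_relP Mxv /dep_relP Mvy x_ne_y vx vy; apply/dep_relP.
  exact: (dep_shortcut alphaK idxK HM Mxv Mvy x_ne_y vx vy).
have /negP := shortcut_acyclic idx_inj no_short shortcut (isT : p :: s != [::]).
exact.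
Qed.
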